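(* The polynomial $\mathbf{p}_t$ is a well-defined invariant of (oriented) virtual knots, and it is a Vassiliev invariant of degree one for virtual knots (with values in the abelian group $\mathbf{Z}[t]$).
   Context: A virtual knot diagram is an oriented closed curve immersed in the plane with finitely many transverse double points, each either a classical crossing (with over/under information) or a virtual crossing (encircled, carrying no over/under information). Virtual knots are equivalence classes of such diagrams under the classical Reidemeister moves and the virtual Reidemeister moves (moves V1, V2, V3 involving only virtual crossings, and the mixed move in which a strand containing only virtual crossings passes across a classical crossing). The sign $\operatorname{sign}(d)\in\{\pm1\}$ of a classical crossing $d$ is $+1$ if the pair (direction of over-strand, direction of under-strand) is a positively oriented basis of the plane, and $-1$ otherwise. Smoothing a diagram at a classical crossing $d$ means replacing $d$ by two non-crossing arcs in the unique way respecting orientations; this yields a two-component virtual link diagram. Order its components as $(1,2)$, forget over/under data, and set $i(d)=\sum_{x\in 1\cap 2}\operatorname{sgn}(x)$, where $1\cap 2$ is the set of classical crossings between the two components and $\operatorname{sgn}(x)=+1$ if (tangent of component 1, tangent of component 2) at $x$ is positively oriented, $-1$ otherwise; $|i(d)|$ does not depend on the ordering. For a virtual knot $K$ with diagram $\widetilde K$, $\mathbf{p}_t(K)=\sum_d \operatorname{sign}(d)\,(t^{|i(d)|}-1)\in\mathbf{Z}[t]$, summed over all classical crossings $d$ of $\widetilde K$. Singular virtual knots are virtual knots with finitely many additional transverse self-intersection points (double-points), considered up to the classical and virtual Reidemeister moves together with the standard moves involving double-points. Any invariant $V$ of virtual knots with values in an abelian group $A$ extends to singular virtual knots by the recursion $V(K)=V(K^+)-V(K^-)$,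 where $K^\pm$ is obtained by resolving a chosen double-point of $K$ into a positive, resp. negative, classical crossing (the result is independent of the order of resolution). $V$ is a Vassiliev invariant of degree $\le n$ if it vanishes on all singular virtual knots with more than $n$ double-points; the degree is the smallest such $n$. *)

From mathcomp Require Import all_boot all_order all_algebra.
From Stdlib Require Import Relations.
Set Implicit Arguments. Unset Strict Implicit. Unset Printing Implicit Defensive.
Import Order.TTheory GRing.Theory Num.Theory.
Local Open Scope ring_scope.

(* One passage of the knot through a classical crossing:
   [lab] = name of the crossing, [over] = the knot passes over here,
   [pos] = the crossing has sign +1 (stored at both passages). *)
Record passage := Pass { lab : nat; over : bool; pos : bool }.

(* A (signed) Gauss code: the sequence of classical crossings met when
   travelling once along the oriented knot from a base point.  Virtual
   crossings are not recorded. *)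
Definition gcode := seq passage.

Definition labels (D : gcode) : seq nat := map lab D.

Definition wf (D : gcode) : Prop :=
  forall d, d \in labels D ->
    exists s, count (fun e => (lab e == d) && over e && (pos e == s)) D = 1%N /\
              count (fun e => (lab e == d) && ~~ over e && (pos e == s)) D = 1%N /\
              count (fun e => lab e == d) D = 2%N.

(* Virtual moves (V1-V3 and the mixed move) do not change the Gauss code. *)

Definition R1 (D D' : gcode) : Prop :=
  exists u v d o s,
    D = u ++ [:: Pass d o s; Pass d (~~ o) s] ++ v /\ D' = u ++ v /\
    d \notin labels (u ++ v).

(* R2: one strand passes over two crossings c, e of opposite signs that are
   passed consecutively (in either order) by a second strand *)
Definition R2 (D D' : gcode) : Prop :=
  exists u v w x c e s,
    D = u ++ [:: Pass c true s; Pass e true (~~ s)] ++ v ++ w ++ x /\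
    (w = [:: Pass c false s; Pass e false (~~ s)] \/
     w = [:: Pass e false (~~ s); Pass c false s]) /\
    D' = u ++ v ++ x /\ c != e /\
    c \notin labels (u ++ v ++ x) /\ e \notin labels (u ++ v ++ x).

(* R3: top strand T, middle strand M, bottom strand B; crossing a = (T over M),
   b = (T over B), c = (M over B).  The booleans tT, tM, tB record whether,
   along T (resp. M, B), a is met before b (resp. a before c, b before c).
   A configuration is a genuine R3 triangle iff
   tT (+) tM = sb (+) sc  and  tM (+) tB = sa (+) sb;
   the move reverses the order along each of the three strands. *)
Definition segT (a b : nat) (sa sb tT : bool) : gcode :=
  if tT then [:: Pass a true sa; Pass b true sb]
  else [:: Pass b true sb; Pass a true sa].
Definition segM (a c : nat) (sa sc tM : bool) : gcode :=
  if tM then [:: Pass a false sa; Pass c true sc]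
  else [:: Pass c true sc; Pass a false sa].
Definition segB (b c : nat) (sb sc tB : bool) : gcode :=
  if tB then [:: Pass b false sb; Pass c false sc]
  else [:: Pass c false sc; Pass b false sb].

Definition R3 (D D' : gcode) : Prop :=
  exists u1 u2 u3 u4 a b c sa sb sc tT tM tB,
    (tT (+) tM = sb (+) sc) /\ (tM (+) tB = sa (+) sb) /\
    ((D = u1 ++ segT a b sa sb tT ++ u2 ++ segM a c sa sc tM ++ u3
             ++ segB b c sb sc tB ++ u4 /\
      D' = u1 ++ segT a b sa sb (~~ tT) ++ u2 ++ segM a c sa sc (~~ tM) ++ u3
             ++ segB b c sb sc (~~ tB) ++ u4) \/
     (D = u1 ++ segT a b sa sb tT ++ u2 ++ segB b c sb sc tB ++ u3
             ++ segM a c sa sc tM ++ u4 /\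
      D' = u1 ++ segT a b sa sb (~~ tT) ++ u2 ++ segB b c sb sc (~~ tB) ++ u3
             ++ segM a c sa sc (~~ tM) ++ u4)).

(* change of base point and renaming of crossings *)
Definition Rot (D D' : gcode) : Prop := D' = rot 1 D.
Definition Relab (D D' : gcode) : Prop :=
  exists f : nat -> nat, injective f /\
    D' = map (fun e => Pass (f (lab e)) (over e) (pos e)) D.

Definition move (D D' : gcode) : Prop :=
  R1 D D' \/ R2 D D' \/ R3 D D' \/ Rot D D' \/ Relab D D'.

(* equivalence of diagrams = same virtual knot *)
Definition vequiv : relation gcode := clos_refl_sym_trans gcode move.

Definition sgnz (e : passage) : int := if pos e then 1 else -1.

(* the arc of the knot strictly between the two passages through d *)
Definition arc (D : gcode) (d : nat) : gcode :=
  let p := index d (labels D) in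
  take (index d (drop p.+1 (labels D))) (drop p.+1 D).

(* i(d): sum over crossings x between the two components obtained by smoothing
   at d of sgn(x) = sign of (tangent of component 1, tangent of component 2),
   component 1 being the arc [arc D d].  sgn(x) = sign(x) if component 1 is
   the over strand at x, and -sign(x) otherwise. *)
Definition ind (D : gcode) (d : nat) : int :=
  let A := arc D d in
  \sum_(e <- A | count (fun e' => lab e' == lab e) A == 1%N)
     (if over e then sgnz e else - sgnz e).

Definition pt (D : gcode) : {poly int} :=
  \sum_(e <- D | over e) (sgnz e)%:~R * ('X^(absz (ind D (lab e))) - 1).

Definition cchange (d : nat) (D : gcode) : gcode :=
  map (fun e => if lab e == d then Pass d (~~ over e) (~~ pos e) else e) D.

(* resolution of the double point d into a crossing of sign b
   (a double point is represented by either of its two resolutions) *)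
Definition resolve (b : bool) (d : nat) (D : gcode) : gcode :=
  if has (fun e => (lab e == d) && (pos e == b)) D then D else cchange d D.

(* extension to singular diagrams (double points = the labels in M) by
   V(K) = V(K+) - V(K-) *)
Fixpoint vext (A : zmodType) (V : gcode -> A) (D : gcode) (M : seq nat) : A :=
  match M with
  | [::] => V D
  | d :: M' => vext V (resolve true d D) M' - vext V (resolve false d D) M'
  end.

Definition vassiliev_le (A : zmodType) (V : gcode -> A) (n : nat) : Prop :=
  forall (D : gcode) (M : seq nat), wf D -> uniq M ->
    all (fun d => d \in labels D) M -> (n < size M)%N -> vext V D M = 0.

Definition vk_invariant (A : Type) (V : gcode -> A) : Prop :=
  forall D D' : gcode, wf D -> wf D' -> vequiv D D' -> V D = V D'.

From Pilot Require Import Defs.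
From HB Require Import structures.
From mathcomp Require Import all_boot all_order all_algebra.
From mathcomp Require Import zify ring lra.
(* Re-imported so that [Defs.over] shadows ssreflect's [over]. *)
Import Defs.
Set Implicit Arguments. Unset Strict Implicit. Unset Printing Implicit Defensive.
Import Order.TTheory GRing.Theory Num.Theory.
Local Open Scope ring_scope.

(** The invariant [i(d)] is read off the Gauss code: smoothing at [d] makes the
   arc between the two passages through [d] the first component, and [i(d)] is
   the signed count [ind] of the crossings met exactly once along that arc. A
   crossing met twice on the arc contributes opposite signs at its two passages,
   so [i(d)] is the signed sum [wsum] over the whole arc. In this form every
   Reidemeister move acts locally on arcs: R1 creates an empty arc, the two
   crossings of R2 have opposite signs and arcs of equal sum, R3 is a finite
   computation, and moving the base point replaces an arc by its complement,
   whose sum is the opposite one because the sum over the whole code vanishes.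
   Changing the crossing [d] negates its sign and leaves every [i] unchanged, so
   [p_t] jumps by [2 sign(d) (t^|i(d)| - 1)]. This first derivative does not see
   the resolutions of other double points, so all second derivatives vanish,
   while on the virtual trefoil it is [2 (t - 1) <> 0]. *)

Definition passage_tuple (e : passage) := (lab e, over e, pos e).
Definition tuple_passage (t : nat * bool * bool) := Pass t.1.1 t.1.2 t.2.
Lemma passage_tupleK : cancel passage_tuple tuple_passage. Proof. by case. Qed.
HB.instance Definition _ := Countable.copy passage (can_type passage_tupleK).

Lemma big_partition_undup (R : nmodType) (I J : eqType) (k : I -> J)
    (r : seq I) (P : pred I) (F : I -> R) :
  \sum_(i <- r | P i) F i =
  \sum_(j <- undup (map k r)) \sum_(i <- r | P i && (k i == j)) F i.
Proof.
rewrite -(exchange_big_dep predT (Q := fun i j => k i == j)) //=.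
rewrite big_seq_cond [RHS]big_seq_cond; apply: eq_bigr => i /andP[ri _].
rewrite -big_filter.
suff -> : [seq j <- undup (map k r) | k i == j] = [:: k i] by rewrite big_seq1.
have ki_r : k i \in undup (map k r) by rewrite mem_undup map_f.
by rewrite (eq_filter (a2 := pred1 (k i))) ?filter_pred1_uniq ?undup_uniq // => j; rewrite eq_sym.
Qed.

Definition wsgn (e : passage) : int := if over e then sgnz e else - sgnz e.
Definition wsum (A : gcode) : int := \sum_(e <- A) wsgn e.

Lemma wsum_nil : wsum [::] = 0.
Proof. exact: big_nil. Qed.
Lemma wsum_cons e A : wsum (e :: A) = wsgn e + wsum A.
Proof. exact: big_cons. Qed.
Lemma wsum_cat A B : wsum (A ++ B) = wsum A + wsum B.
Proof. exact: big_cat. Qed.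

Lemma labels_cat (A B : gcode) : labels (A ++ B) = labels A ++ labels B.
Proof. exact: map_cat. Qed.

Lemma count_lab z (s : gcode) :
  count (fun e => lab e == z) s = count_mem z (labels s).
Proof. by rewrite count_map; apply: eq_count. Qed.

Lemma count_lab_eq0 z (s : gcode) :
  (count (fun e => lab e == z) s == 0%N) = (z \notin labels s).
Proof. by rewrite count_lab; apply/eqP/count_memPn. Qed.

Lemma count_lab_gt0 z (s : gcode) :
  (0 < count (fun e => lab e == z) s)%N = (z \in labels s).
Proof. by rewrite lt0n count_lab_eq0 negbK. Qed.

Lemma lab_neq_notin d e (s : gcode) : d \notin labels s -> e \in s -> lab e != d.
Proof. by move=> ds es; apply: contraNneq ds => <-; apply: map_f. Qed.

Lemma sum_lab_notin (R : nmodType) z (s : gcode) (F : passage -> R) :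
  z \notin labels s -> \sum_(e <- s | lab e == z) F e = 0.
Proof.
by move=> zs; rewrite big_seq_cond big_pred0 // => e; apply/negbTE;
  rewrite negb_and; case: (boolP (e \in s)) => //= /(lab_neq_notin zs).
Qed.

Definition upto (x : nat) (s : gcode) : gcode := take (index x (labels s)) s.
Arguments upto : simpl never.

Lemma upto_cons x e s : upto x (e :: s) = if lab e == x then [::] else e :: upto x s.
Proof. by rewrite /upto /=; case: eqP. Qed.

Lemma arc_cons x e s : arc (e :: s) x = if lab e == x then upto x s else arc s x.
Proof. by rewrite /arc /upto /=; case: eqP => //= _; rewrite !drop0. Qed.

Lemma arc_catl x u s : x \notin labels u -> arc (u ++ s) x = arc s x.
Proof.
elim: u => //= e u IH; rewrite inE negb_or => /andP[xe xu].
by rewrite arc_cons eq_sym (negbTE xe) IH.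
Qed.

Lemma upto_catl x u s : x \notin labels u -> upto x (u ++ s) = u ++ upto x s.
Proof.
elim: u => //= e u IH; rewrite inE negb_or => /andP[xe xu].
by rewrite upto_cons eq_sym (negbTE xe) IH.
Qed.

Lemma upto_catr x u s : x \in labels u -> upto x (u ++ s) = upto x u.
Proof.
elim: u => //= e u IH; rewrite inE => xeu; rewrite !upto_cons.
by case: eqP => // /eqP; rewrite eq_sym => /negbTE xe; rewrite IH //; move: xeu; rewrite xe.
Qed.

Lemma arc_catr y (s t : gcode) : (2 <= count (fun e => lab e == y) s)%N ->
  arc (s ++ t) y = arc s y.
Proof.
elim: s => //= e s IH; rewrite !arc_cons; case: eqP => /= [_|_] H.
  by rewrite upto_catr // -count_lab_gt0.
exact: IH.
Qed.

Lemma arc_insert u v x : exists w1 w2 (b : bool), forall B, x \notin labels B ->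
  arc (u ++ B ++ v) x = w1 ++ (if b then B else [::]) ++ w2.
Proof.
elim: u => [|e u IH] /=.
  by exists (arc v x), [::], false; move=> B xB; rewrite arc_catl // /= cats0.
case: (eqVneq (lab e) x) => [ex|nex]; last first.
  by have [w1 [w2 [b H]]] := IH; exists w1, w2, b; move=> B xB; rewrite arc_cons (negbTE nex) H.
case: (boolP (x \in labels u)) => xu.
  by exists (upto x u), [::], false; move=> B xB; rewrite arc_cons ex eqxx upto_catr // /= cats0.
by exists u, (upto x v), true; move=> B xB; rewrite arc_cons ex eqxx !upto_catl.
Qed.

Lemma wsum_arc_replace u v B B' x : x \notin labels B -> x \notin labels B' ->
  wsum B = wsum B' -> wsum (arc (u ++ B ++ v) x) = wsum (arc (u ++ B' ++ v) x).
Proof.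
move=> xB xB' eqB; have [w1 [w2 [b H]]] := arc_insert u v x.
by rewrite !H // !wsum_cat; case: (b); rewrite ?eqB.
Qed.

Lemma wsum_arc_remove u v B x : x \notin labels B -> wsum B = 0 ->
  wsum (arc (u ++ B ++ v) x) = wsum (arc (u ++ v) x).
Proof. by move=> xB B0; rewrite (@wsum_arc_replace u v B [::]) // wsum_nil. Qed.

Definition crossing_pair (s : gcode) : Prop :=
  exists b, count (fun e => over e && (pos e == b)) s = 1%N /\
            count (fun e => ~~ over e && (pos e == b)) s = 1%N /\ size s = 2%N.

Lemma wfE D : wf D <->
  forall d, d \in labels D -> crossing_pair (filter (fun e => lab e == d) D).
Proof.
have E (a1 a2 : pred passage) d :
    count (fun e => (lab e == d) && a1 e && a2 e) D =
    count (fun e => a1 e && a2 e) (filter (fun e => lab e == d) D).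
  by rewrite count_filter; apply: eq_count => e /=; case: (lab e == d); rewrite ?andbT ?andbF.
by split=> H d /H [b cnt]; exists b; move: cnt; rewrite size_filter ?E.
Qed.

Lemma crossing_pairP s : crossing_pair s ->
  exists x y, s = [:: x; y] /\ over y = ~~ over x /\ pos y = pos x.
Proof.
case=> b [c1 [c2 sz]]; case: s c1 c2 sz => [|x [|y []]] //= c1 c2 _; exists x, y; split=> //.
by move: c1 c2; case: x => ? [] []; case: y => ? [] []; case: b.
Qed.

Lemma crossing_pair2 x y : over y = ~~ over x -> pos y = pos x ->
  crossing_pair [:: x; y].
Proof. by move=> oy py; exists (pos x); rewrite /= oy py eqxx; case: (over x). Qed.

Lemma crossing_pair_perm s t : perm_eq s t -> crossing_pair s -> crossing_pair t.
Proof. by move=> st [b cnt]; exists b; rewrite -!(permP st) -(perm_size st). Qed.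

Lemma filter_lab_notin d (s : gcode) :
  d \notin labels s -> filter (fun e => lab e == d) s = [::].
Proof. by move=> ds; apply/eqP; rewrite -size_eq0 size_filter count_lab_eq0. Qed.

Lemma wf_perm D D' : perm_eq D D' -> wf D -> wf D'.
Proof.
move=> DD' /wfE wD; apply/wfE => d; rewrite -(perm_mem (perm_map lab DD')).
by move/wD; apply: crossing_pair_perm; apply: perm_filter.
Qed.

Lemma wf_perm_iff D D' : perm_eq D D' -> wf D <-> wf D'.
Proof. by move=> DD'; split; apply: wf_perm; rewrite // perm_sym. Qed.

Lemma wf_cat (A B : gcode) : {in labels A, forall z, z \notin labels B} ->
  wf (A ++ B) <-> wf A /\ wf B.
Proof.
move=> AB; have BA : {in labels B, forall z, z \notin labels A}.
  by move=> z zB; apply: contraL zB => /AB.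
rewrite !wfE; split.
  move=> H; split=> d dl; move: (H d); rewrite filter_cat labels_cat mem_cat dl ?orbT.
    by rewrite (filter_lab_notin (AB d dl)) cats0; apply.
  by rewrite (filter_lab_notin (BA d dl)); apply.
move=> [HA HB] d; rewrite labels_cat mem_cat filter_cat => /orP[] dl.
  by rewrite (filter_lab_notin (AB d dl)) cats0; apply: HA.
by rewrite (filter_lab_notin (BA d dl)); apply: HB.
Qed.

Lemma wf_filter_lab D d : wf D -> d \in labels D ->
  exists x y, filter (fun e => lab e == d) D = [:: x; y] /\
    over y = ~~ over x /\ pos y = pos x.
Proof. by move=> /wfE wD /wD /crossing_pairP. Qed.

Lemma wf_count_lab D d : wf D -> d \in labels D ->
  count (fun e => lab e == d) D = 2%N.
Proof.
by move=> wD /(wf_filter_lab wD) [x [y [xy _]]]; rewrite -size_filter xy.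
Qed.

Lemma wf_count_lab_le2 D d : wf D -> (count (fun e => lab e == d) D <= 2)%N.
Proof.
move=> wD; case: (boolP (d \in labels D)) => [/(wf_count_lab wD) -> //|].
by rewrite -count_lab_eq0 => /eqP ->.
Qed.

Lemma wf_sum_wsgn_lab D d : wf D -> \sum_(e <- D | lab e == d) wsgn e = 0.
Proof.
move=> wD; case: (boolP (d \in labels D)) => [dD|]; last exact: sum_lab_notin.
have [x [y [xy [oy py]]]] := wf_filter_lab wD dD.
rewrite -big_filter xy big_cons big_seq1 /wsgn /sgnz oy py.
by case: (over x); rewrite /= ?subrr ?addNr.
Qed.

(* Inside a well-formed code, a label met twice on [A] has both its passages in [A]. *)
Lemma wsum_infix p A q : wf (p ++ A ++ q) ->
  \sum_(e <- A | count (fun e' => lab e' == lab e) A == 1%N) wsgn e = wsum A.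
Proof.
move=> wD; rewrite /wsum (big_partition_undup lab) [RHS](big_partition_undup lab).
apply: eq_big_seq => z; rewrite mem_undup -count_lab_gt0 => zA.
case: (eqVneq (count (fun e => lab e == z) A) 1%N) => [c1|c1].
  by apply: eq_bigl => e; case: (eqVneq (lab e) z) => [->|]; rewrite ?andbF ?c1.
rewrite big_pred0 => [|e]; last first.
  by case: (eqVneq (lab e) z) => [->|]; rewrite ?andbF ?(negbTE c1).
have := wf_count_lab_le2 z wD; rewrite !count_cat => le2.
have c2 : count (fun e => lab e == z) A = 2%N by lia.
have p0 : count (fun e => lab e == z) p == 0%N by lia.
have q0 : count (fun e => lab e == z) q == 0%N by lia.
rewrite count_lab_eq0 in p0; rewrite count_lab_eq0 in q0.
have := wf_sum_wsgn_lab z wD.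
rewrite !big_cat /= (sum_lab_notin _ p0) (sum_lab_notin _ q0) add0r addr0.
by move=> ->.
Qed.

Lemma ind_wsum D d : wf D -> ind D d = wsum (arc D d).
Proof.
move=> wD; rewrite -(@wsum_infix (take (index d (labels D)).+1 D) _
   (drop (index d (drop (index d (labels D)).+1 (labels D)))
      (drop (index d (labels D)).+1 D))) ?/arc ?cat_take_drop //.
Qed.

Lemma wsum_wf D : wf D -> wsum D = 0.
Proof.
move=> wD; rewrite -(@wsum_infix [::] D [::]) ?cats0 //.
rewrite big_seq_cond big_pred0 // => e; apply/negbTE; rewrite negb_and.
by case: (boolP (e \in D)) => //= eD; rewrite (wf_count_lab wD (map_f lab eD)).
Qed.

Definition pt_term (D : gcode) (e : passage) : {poly int} :=
  (sgnz e)%:~R * ('X^(absz (wsum (arc D (lab e)))) - 1).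
Definition pt_wsum (D : gcode) : {poly int} := \sum_(e <- D | over e) pt_term D e.

Lemma pt_wsumE D : wf D -> pt D = pt_wsum D.
Proof. by move=> wD; apply: eq_bigr => e _; rewrite /pt_term ind_wsum. Qed.

Lemma pt_term_arc_nil D e : arc D (lab e) = [::] -> pt_term D e = 0.
Proof. by rewrite /pt_term => ->; rewrite wsum_nil expr0 subrr mulr0. Qed.

Lemma pt_term_eq D D' e :
  wsum (arc D (lab e)) = wsum (arc D' (lab e)) -> pt_term D e = pt_term D' e.
Proof. by rewrite /pt_term => ->. Qed.

Lemma perm_insert (u B v : gcode) : perm_eq (u ++ B ++ v) (B ++ u ++ v).
Proof. by rewrite perm_catCA. Qed.

Lemma pt_wsum_split D B D' : perm_eq D (B ++ D') ->
  \sum_(e <- B | over e) pt_term D e = 0 ->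
  {in D', forall e, pt_term D e = pt_term D' e} -> pt_wsum D = pt_wsum D'.
Proof.
move=> DBD' termB0 eq_term; rewrite /pt_wsum (perm_big _ DBD') big_cat /= termB0.
by rewrite add0r big_seq_cond [RHS]big_seq_cond; apply: eq_bigr => e /andP[/eq_term].
Qed.

Lemma pt_wsum_perm D D' : perm_eq D D' ->
  {in D', forall e, pt_term D e = pt_term D' e} -> pt_wsum D = pt_wsum D'.
Proof. by move=> DD'; apply: (pt_wsum_split (B := [::])); rewrite ?big_nil. Qed.

Lemma R1_wf D D' : R1 D D' -> wf D <-> wf D'.
Proof.
move=> [u [v [d [o [s [-> [-> dD']]]]]]].
rewrite (wf_perm_iff (perm_insert _ _ _)) wf_cat; last first.
  by move=> z; rewrite !inE orbb => /eqP ->.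
suff : wf [:: Pass d o s; Pass d (~~ o) s] by tauto.
by apply/wfE => z; rewrite !inE orbb => /eqP -> /=; rewrite eqxx; apply: crossing_pair2.
Qed.

Lemma R1_pt D D' : R1 D D' -> pt_wsum D = pt_wsum D'.
Proof.
move=> [u [v [d [o [s [-> [-> dD']]]]]]].
have du : d \notin labels u by move: dD'; rewrite labels_cat mem_cat negb_or => /andP[].
apply: (pt_wsum_split (perm_insert _ _ _)).
  rewrite big_seq_cond big1 // => e /andP[]; rewrite !inE => /orP[] /eqP -> _;
  by apply: pt_term_arc_nil; rewrite arc_catl //= arc_cons eqxx upto_cons eqxx.
move=> e eD'; apply/pt_term_eq/wsum_arc_remove.
- by rewrite /= !inE orbb (lab_neq_notin dD' eD').
- by rewrite wsum_cons wsum_cons wsum_nil /wsgn /=; case: o; rewrite addr0 ?subrr ?addNr.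
Qed.

Lemma R2_wf D D' : R2 D D' -> wf D <-> wf D'.
Proof.
move=> [u [v [W [x [c [e [s [-> [HW [-> [ce [cD' eD']]]]]]]]]]]].
set B := [:: Pass c true s; Pass e true (~~ s)].
have perm_BW : perm_eq (u ++ B ++ v ++ W ++ x) ((B ++ W) ++ u ++ v ++ x).
  by apply/permP => a; rewrite !count_cat; lia.
rewrite (wf_perm_iff perm_BW) wf_cat; last first.
  move=> z; rewrite /B; case: HW => -> /=; rewrite !inE;
  by case/or4P => /eqP ->.
suff : wf (B ++ W) by tauto.
have [ec ce'] : (e == c) = false /\ (c == e) = false by rewrite eq_sym (negbTE ce).
apply/wfE => z; rewrite /B; case: HW => -> /=; rewrite !inE.
all: by case/or4P => /eqP -> /=; rewrite ?eqxx ?ec ?ce' /=; apply: crossing_pair2.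
Qed.

Lemma R2_pt D D' : R2 D D' -> pt_wsum D = pt_wsum D'.
Proof.
move=> [u [v [W [x [c [e [s [-> [HW [-> [ce [cD' eD']]]]]]]]]]]].
set B := [:: Pass c true s; Pass e true (~~ s)].
set D0 := u ++ B ++ v ++ W ++ x.
have [ec ce'] : (e == c) = false /\ (c == e) = false by rewrite eq_sym (negbTE ce).
move: (cD') (eD'); rewrite !labels_cat !mem_cat !negb_or => /and3P[cu cv _] /and3P[eu ev _].
have perm_BW : perm_eq D0 ((B ++ W) ++ u ++ v ++ x).
  by apply/permP => a; rewrite !count_cat; lia.
have B0 : wsum B = 0 by rewrite /wsum !big_cons big_nil /wsgn /=; case: (s).
have W0 : wsum W = 0 by case: HW => ->; rewrite /wsum !big_cons big_nil /wsgn /=; case: (s).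
have arc_ce : wsum (arc D0 c) = wsum (arc D0 e).
  rewrite /D0 (arc_catl _ cu) (arc_catl _ eu) /B /= !arc_cons /= eqxx ce'.
  rewrite upto_cons /= ec eqxx (upto_catl _ cv) (upto_catl _ ev).
  by case: HW => -> /=; rewrite !upto_cons /= ?eqxx ?ec ?ce' /= ?upto_cons ?eqxx
    ?(wsum_cons, wsum_cat, wsum_nil) /wsgn /sgnz /=; case: (s) => /=; ring.
apply: (pt_wsum_split perm_BW).
  have Wunder : all (fun a => ~~ over a) W by case: HW => ->.
  rewrite big_cat /= [X in _ + X]big1_seq ?addr0 => [|a /andP[oa aW]]; last first.
    by move/allP: Wunder => /(_ a aW); rewrite oa.
  by rewrite /B !big_cons big_nil /= /pt_term /= -arc_ce /sgnz; case: (s) => /=; ring.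
move=> a aD'; have [ac ae] : lab a != c /\ lab a != e by rewrite !(lab_neq_notin _ aD').
have aB : lab a \notin labels B by rewrite /= !inE !negb_or ac ae.
have aW : lab a \notin labels W by case: HW => -> /=; rewrite !inE !negb_or ac ae.
apply: pt_term_eq; rewrite (wsum_arc_remove _ _ aB B0) catA.
by rewrite (wsum_arc_remove _ _ aW W0) -catA.
Qed.

(* [mb] chooses between the two configurations allowed in [R3]. *)
Lemma R3_wsum_arc u1 u2 u3 u4 a b c sa sb sc tT tM tB (mb : bool) :
  tT (+) tM = sb (+) sc -> tM (+) tB = sa (+) sb ->
  uniq [:: a; b; c] ->
  {in [:: a; b; c], forall z, z \notin labels (u1 ++ u2 ++ u3 ++ u4)} ->
  {in [:: a; b; c], forall z,
  wsum (arc (u1 ++ segT a b sa sb tT ++ u2 ++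
             (if mb then segM a c sa sc tM else segB b c sb sc tB) ++ u3 ++
             (if mb then segB b c sb sc tB else segM a c sa sc tM) ++ u4) z) =
  wsum (arc (u1 ++ segT a b sa sb (~~ tT) ++ u2 ++
             (if mb then segM a c sa sc (~~ tM) else segB b c sb sc (~~ tB)) ++ u3 ++
             (if mb then segB b c sb sc (~~ tB) else segM a c sa sc (~~ tM)) ++ u4) z)}.
Proof.
move=> C1 C2 uabc abc_u.
have [ab ac bc] : [/\ (a == b) = false, (a == c) = false & (b == c) = false].
  by move: uabc; rewrite /= !inE negb_or andbT => /andP[/andP[/negbTE -> /negbTE ->] /negbTE].
have [ba ca cb] : [/\ (b == a) = false, (c == a) = false & (c == b) = false].
  by rewrite !(eq_sym _ a) (eq_sym c).
move: (abc_u a) (abc_u b) (abc_u c); rewrite !inE !eqxx ?orbT !labels_cat !mem_cat.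
rewrite !negb_or => /(_ isT)/and4P[a1 a2 a3 a4] /(_ isT)/and4P[b1 b2 b3 b4].
move=> /(_ isT)/and4P[c1 c2 c3 c4] z; rewrite !inE => /or3P[] /eqP ->; move: C1 C2.
all: case: mb; case: tT; case: tM; case: tB; rewrite /segT /segM /segB /=.
all: repeat (progress (rewrite /= ?arc_cons ?upto_cons /= ?eqxx ?ab ?ba ?ac ?ca ?bc ?cb /=;
     try (rewrite arc_catl; last done);
     try (rewrite upto_catl; last done))).
all: rewrite ?(wsum_cons, wsum_cat, wsum_nil) /wsgn /sgnz /=.
all: case: sa; case: sb; case: sc => //= _ _; ring.
Qed.

Lemma perm_segT a b sa sb t t' : perm_eq (segT a b sa sb t) (segT a b sa sb t').
Proof. by case: t; case: t' => //; apply/permP => p /=; lia. Qed.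
Lemma perm_segM a c sa sc t t' : perm_eq (segM a c sa sc t) (segM a c sa sc t').
Proof. by case: t; case: t' => //; apply/permP => p /=; lia. Qed.
Lemma perm_segB b c sb sc t t' : perm_eq (segB b c sb sc t) (segB b c sb sc t').
Proof. by case: t; case: t' => //; apply/permP => p /=; lia. Qed.

Lemma R3_core_labels a b c sa sb sc U :
  wf ((segT a b sa sb true ++ segM a c sa sc true ++ segB b c sb sc true) ++ U) ->
  uniq [:: a; b; c] /\ {in [:: a; b; c], forall z, z \notin labels U}.
Proof.
set S := segT _ _ _ _ _ ++ _ => wD.
have cnt z : z \in [:: a; b; c] -> count (fun e => lab e == z) (S ++ U) = 2%N.
  move=> zabc; apply: wf_count_lab wD _.
  by rewrite labels_cat mem_cat; move: zabc; rewrite !inE /= => /or3P[] ->; rewrite ?orbT.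
move: (cnt a) (cnt b) (cnt c); rewrite !inE !eqxx ?orbT => /(_ isT) ca /(_ isT) cb /(_ isT) cc.
rewrite count_cat /= !eqxx (eq_sym b a) (eq_sym c a) (eq_sym c b) in ca cb cc.
split.
  rewrite /= !inE !negb_or andbT; move: ca cb cc.
  by case: (a == b); case: (a == c); case: (b == c) => /=; lia.
move=> z; rewrite !inE -count_lab_eq0 => /or3P[] /eqP ->; apply/eqP; lia.
Qed.

Lemma wsum_arc_perm3 u1 u2 u3 u4 S1 S2 S3 S1' S2' S3' z :
  perm_eq S1 S1' -> perm_eq S2 S2' -> perm_eq S3 S3' ->
  z \notin labels (S1 ++ S2 ++ S3) ->
  wsum (arc (u1 ++ S1 ++ u2 ++ S2 ++ u3 ++ S3 ++ u4) z) =
  wsum (arc (u1 ++ S1' ++ u2 ++ S2' ++ u3 ++ S3' ++ u4) z).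
Proof.
have replace S S' : perm_eq S S' -> z \notin labels S ->
    [/\ z \notin labels S, z \notin labels S' & wsum S = wsum S'].
  by move=> SS' zS; rewrite /wsum (perm_big _ SS') -(perm_mem (perm_map lab SS')).
move=> /replace p1 /replace p2 /replace p3; rewrite !labels_cat !mem_cat !negb_or.
move=> /and3P[/p1[z1 z1' e1] /p2[z2 z2' e2] /p3[z3 z3' e3]].
rewrite (wsum_arc_replace _ _ z1 z1' e1).
have E2 S S' : u1 ++ S1' ++ u2 ++ S ++ u3 ++ S' ++ u4 =
    (u1 ++ S1' ++ u2) ++ S ++ (u3 ++ S' ++ u4) by rewrite !catA.
rewrite !E2 (wsum_arc_replace _ _ z2 z2' e2) -!E2.
have E3 S : u1 ++ S1' ++ u2 ++ S2' ++ u3 ++ S ++ u4 =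
    (u1 ++ S1' ++ u2 ++ S2' ++ u3) ++ S ++ u4 by rewrite !catA.
by rewrite !E3 (wsum_arc_replace _ _ z3 z3' e3).
Qed.

Lemma R3_perm D D' : R3 D D' -> perm_eq D D'.
Proof.
move=> [u1 [u2 [u3 [u4 [a [b [c [sa [sb [sc [tT [tM [tB [_ [_ H]]]]]]]]]]]]]]].
case: H => [[-> ->]|[-> ->]]; apply/permP => p; rewrite !count_cat.
all: by rewrite (permP (perm_segT _ _ _ _ tT (~~ tT))) (permP (perm_segM _ _ _ _ tM (~~ tM)))
  (permP (perm_segB _ _ _ _ tB (~~ tB))).
Qed.

Lemma R3_wf D D' : R3 D D' -> wf D <-> wf D'.
Proof. by move/R3_perm/wf_perm_iff. Qed.

Lemma R3_pt D D' : wf D -> R3 D D' -> pt_wsum D = pt_wsum D'.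
Proof.
move=> wD R; apply: pt_wsum_perm; first exact: R3_perm.
move: R => [u1 [u2 [u3 [u4 [a [b [c [sa [sb [sc [tT [tM [tB [C1 [C2 H]]]]]]]]]]]]]]].
have core : wf ((segT a b sa sb true ++ segM a c sa sc true ++ segB b c sb sc true) ++
      (u1 ++ u2 ++ u3 ++ u4)).
  apply: wf_perm wD; apply/permP => p.
  case: H => [[-> _]|[-> _]]; rewrite !count_cat (permP (perm_segT _ _ _ _ tT true))
    (permP (perm_segM _ _ _ _ tM true)) (permP (perm_segB _ _ _ _ tB true)); lia.
have [uabc abc_u] := R3_core_labels core.
move=> e _; apply: pt_term_eq.
case: (boolP (lab e \in [:: a; b; c])) => eabc.
  by case: H => [[-> ->]|[-> ->]];
    [exact: (R3_wsum_arc true C1 C2) | exact: (R3_wsum_arc false C1 C2)].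
have [ea eb ec] : [/\ lab e != a, lab e != b & lab e != c].
  by move: eabc; rewrite !inE !negb_or => /and3P.
by case: H => [[-> ->]|[-> ->]]; apply: wsum_arc_perm3;
  rewrite ?perm_segT ?perm_segM ?perm_segB //;
  case: (tT); case: (tM); case: (tB); rewrite /= !inE (negbTE ea) (negbTE eb) (negbTE ec).
Qed.

Lemma split_first_lab z (s : gcode) : z \in labels s ->
  exists s1 e s2, [/\ s = s1 ++ e :: s2, lab e = z & z \notin labels s1].
Proof.
elim: s => //= e s IH; rewrite inE; case: (eqVneq z (lab e)) => [->|ze] /= zs.
  by exists [::], e, s.
have [s1 [e' [s2 [-> le z1]]]] := IH zs.
by exists (e :: s1), e', s2; rewrite /= inE negb_or ze.
Qed.

Lemma Rot_pt D D' : wf D -> Rot D D' -> pt_wsum D = pt_wsum D'.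
Proof.
move=> wD ->; case: D wD => [|e s] wD //.
apply: pt_wsum_perm; first by rewrite perm_sym perm_rot.
rewrite rot1_cons -cats1 => f fD'.
have fD : lab f \in labels (e :: s).
  by move: fD'; rewrite mem_cat inE => /orP[/(map_f lab) fs|/eqP ->]; rewrite inE ?fs ?orbT ?eqxx.
case: (eqVneq (lab f) (lab e)) => [fe|fe]; last first.
  apply: pt_term_eq; rewrite arc_cons eq_sym (negbTE fe) arc_catr //.
  by have := wf_count_lab wD fD; rewrite /= eq_sym (negbTE fe) add0n => ->.
have := wf_count_lab wD fD; rewrite /= fe eqxx add1n => -[c1].
have [s1 [e' [s2 [se le es1]]]] : exists s1 e' s2,
    [/\ s = s1 ++ e' :: s2, lab e' = lab e & lab e \notin labels s1].
  by apply: split_first_lab; rewrite -count_lab_gt0 c1.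
have es2 : lab e \notin labels s2.
  move: es1 c1; rewrite se count_cat /= le eqxx -!count_lab_eq0 => /eqP ->; lia.
have wsum_s1 : wsum s1 = - wsum s2.
  have := wsum_wf wD; have := wf_sum_wsgn_lab (lab e) wD.
  rewrite se big_cons eqxx big_cat /= big_cons le eqxx.
  rewrite (sum_lab_notin _ es1) (sum_lab_notin _ es2) wsum_cons wsum_cat wsum_cons.
  by rewrite add0r addr0; lra.
rewrite /pt_term fe se arc_cons eqxx (upto_catl _ es1) upto_cons le eqxx cats0.
rewrite -catA (arc_catl _ es1) /= arc_cons le eqxx (upto_catl _ es2) upto_cons eqxx.
by rewrite cats0 wsum_s1 abszN.
Qed.

Section Relabel.
Variable f : nat -> nat.
Hypothesis f_inj : injective f.

Definition relab (e : passage) := Pass (f (lab e)) (over e) (pos e).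

Lemma labels_relab D : labels (map relab D) = map f (labels D).
Proof. by rewrite /labels -!map_comp. Qed.

Lemma filter_relab d D :
  filter (fun e => lab e == f d) (map relab D) = map relab (filter (fun e => lab e == d) D).
Proof. by rewrite filter_map; congr map; apply: eq_filter => e /=; rewrite (inj_eq f_inj). Qed.

Lemma crossing_pair_relab s : crossing_pair (map relab s) <-> crossing_pair s.
Proof. by split=> -[b cnt]; exists b; move: cnt; rewrite size_map !count_map. Qed.

Lemma wf_relab D : wf (map relab D) <-> wf D.
Proof.
rewrite !wfE labels_relab; split=> H d.
  by move=> dD; rewrite -crossing_pair_relab -filter_relab; apply/H/map_f.
by case/mapP => d' d'D ->; rewrite filter_relab crossing_pair_relab; apply: H.
Qed.

Lemma arc_relab D d : arc (map relab D) (f d) = map relab (arc D d).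
Proof.
by rewrite /arc labels_relab !index_map // -!map_drop index_map // map_take map_drop.
Qed.

Lemma pt_wsum_relab D : pt_wsum (map relab D) = pt_wsum D.
Proof.
rewrite /pt_wsum big_map; apply: eq_bigr => e _.
by rewrite /pt_term /= arc_relab /wsum big_map.
Qed.

End Relabel.

Lemma move_wf D D' : move D D' -> wf D <-> wf D'.
Proof.
case=> [|[|[|[->|[f [f_inj ->]]]]]].
- exact: R1_wf.
- exact: R2_wf.
- exact: R3_wf.
- by apply: wf_perm_iff; rewrite perm_sym perm_rot.
- by rewrite wf_relab.
Qed.

Lemma move_pt D D' : wf D -> move D D' -> pt D = pt D'.
Proof.
move=> wD mDD'; have wD' : wf D' by apply/(move_wf mDD').
rewrite (pt_wsumE wD) (pt_wsumE wD').
case: mDD' => [|[|[|[|[f [f_inj ->]]]]]].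
- exact: R1_pt.
- exact: R2_pt.
- exact: R3_pt.
- exact: Rot_pt.
- by rewrite pt_wsum_relab.
Qed.

Lemma vk_invariant_pt : vk_invariant pt.
Proof.
move=> D D' wD _ DD'.
suff : (wf D <-> wf D') /\ (wf D -> pt D = pt D') by case=> _ ->.
elim: DD' {wD} => {D D'} [D D' mDD'|D|D D' _ [IHwf IHpt]|D D' D'' _ [IH1wf IH1pt] _ [IH2wf IH2pt]].
- by split; [exact: move_wf | move=> wD; exact: move_pt].
- by [].
- by split; [tauto | move=> wD'; rewrite IHpt //; apply/IHwf].
- by split; [tauto | move=> wD; rewrite IH1pt // IH2pt //; apply/IH1wf].
Qed.

Definition flip_at (x : nat) (e : passage) : passage :=
  if lab e == x then Pass x (~~ over e) (~~ pos e) else e.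

Lemma lab_flip_at x e : lab (flip_at x e) = lab e.
Proof. by rewrite /flip_at; case: eqP. Qed.

Lemma wsgn_flip_at x e : wsgn (flip_at x e) = wsgn e.
Proof.
by rewrite /flip_at; case: eqP => // _; rewrite /wsgn /sgnz /=; case: (over e); case: (pos e).
Qed.

Lemma labels_cchange x D : labels (cchange x D) = labels D.
Proof. by rewrite /labels /cchange -map_comp; apply: eq_map => e; apply: lab_flip_at. Qed.

Lemma ind_cchange x D d : ind (cchange x D) d = ind D d.
Proof.
rewrite /ind /arc labels_cchange /cchange -map_drop -map_take big_map.
apply: eq_big => e; last by rewrite /= -!/(wsgn _) wsgn_flip_at.
by rewrite count_map lab_flip_at; congr (_ == _); apply: eq_count => e'; rewrite /= lab_flip_at.
Qed.

Lemma wf_cchange x D : wf D -> wf (cchange x D).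
Proof.
move=> /wfE wD; apply/wfE => y; rewrite labels_cchange => /wD.
rewrite /cchange filter_map (eq_filter (a2 := fun e => lab e == y)); last first.
  by move=> e; rewrite /= lab_flip_at.
have lab_y e : e \in filter (fun e => lab e == y) D -> lab e = y.
  by rewrite mem_filter => /andP[/eqP].
case: (eqVneq y x) => [yx|yx] in lab_y *; last first.
  rewrite map_id_in // => e /lab_y ey.
  by rewrite /flip_at ey (negbTE yx).
case=> b [c1 [c2 sz]]; exists (~~ b); rewrite !count_map size_map; split; last split=> //.
- rewrite -c2; apply: eq_in_count => e /lab_y ey; rewrite /= /flip_at ey yx eqxx /=.
  by case: (pos e); case: (b).
- rewrite -c1; apply: eq_in_count => e /lab_y ey; rewrite /= /flip_at ey yx eqxx /=.
  by case: (over e); case: (pos e); case: (b).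
Qed.

Lemma wf_resolve b x D : wf D -> wf (resolve b x D).
Proof. by rewrite /resolve; case: has => // /wf_cchange. Qed.

Lemma labels_resolve b x D : labels (resolve b x D) = labels D.
Proof. by rewrite /resolve; case: has; rewrite ?labels_cchange. Qed.

Lemma ind_resolve b x D d : ind (resolve b x D) d = ind D d.
Proof. by rewrite /resolve; case: has; rewrite ?ind_cchange. Qed.

Lemma sum_flip_at (R : comPzRingType) (Q : nat -> R) d (L : gcode) :
  \sum_(e <- L | over e) (sgnz e)%:~R * Q (lab e) -
  \sum_(e <- map (flip_at d) L | over e) (sgnz e)%:~R * Q (lab e) =
  \sum_(e <- L | lab e == d) (sgnz e)%:~R * Q (lab e).
Proof.
elim: L => [|e L IH]; first by rewrite !big_nil subrr.
rewrite /= !big_cons -IH /flip_at; case: (eqVneq (lab e) d) => [->|ne] /=.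
  by rewrite /sgnz; case: (over e); case: (pos e); rewrite /= ?mulN1r ?mul1r; ring.
by case: (over e) => //=; ring.
Qed.

Lemma pt_cchange d D : pt D - pt (cchange d D) =
  (\sum_(e <- D | lab e == d) (sgnz e)%:~R) * ('X^(absz (ind D d)) - 1).
Proof.
have -> : pt (cchange d D) = \sum_(e <- map (flip_at d) D | over e)
    (sgnz e)%:~R * ('X^(absz (ind D (lab e))) - 1).
  by apply: eq_bigr => e _; rewrite ind_cchange.
rewrite (sum_flip_at (fun l => 'X^(absz (ind D l)) - 1)) big_distrl /=.
by apply: eq_bigr => e /eqP ->.
Qed.

Lemma pt_resolveB d D : wf D -> d \in labels D ->
  pt (resolve true d D) - pt (resolve false d D) = 2%:R * ('X^(absz (ind D d)) - 1).
Proof.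
move=> wD dD; have [x [y [xy [_ py]]]] := wf_filter_lab wD dD.
have has_sign b : has (fun e => (lab e == d) && (pos e == b)) D = (pos x == b).
  rewrite has_count (_ : count _ D = count (fun e => pos e == b) (filter
    (fun e => lab e == d) D)); last by rewrite count_filter; apply: eq_count => e /=; rewrite andbC.
  by rewrite xy /= py; case: (pos x == b).
have sum_sign : \sum_(e <- D | lab e == d) ((sgnz e)%:~R : {poly int}) = 2%:R * (sgnz x)%:~R.
  by rewrite -big_filter xy big_cons big_seq1 /sgnz py; case: (pos x); rewrite /=; ring.
rewrite /resolve !has_sign; case: (boolP (pos x)) => px /=.
  by rewrite pt_cchange sum_sign /sgnz px mulr1.
by rewrite -opprB pt_cchange sum_sign /sgnz (negbTE px) /=; ring.
Qed.

Lemma has_cchange x d b D : x != d ->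
  has (fun e => (lab e == d) && (pos e == b)) (cchange x D) =
  has (fun e => (lab e == d) && (pos e == b)) D.
Proof.
move=> xd; rewrite /cchange has_map; apply: eq_has => e /=; rewrite /flip_at.
by case: (eqVneq (lab e) x) => [ex|] //=; rewrite ex (negbTE xd).
Qed.

Lemma cchangeC x d D : cchange x (cchange d D) = cchange d (cchange x D).
Proof.
rewrite /cchange -!map_comp; apply: eq_map => e /=; rewrite /flip_at.
case: (eqVneq (lab e) x) => [ex|ex]; case: (eqVneq (lab e) d) => [ed|ed] //=.
- by rewrite -ex -ed eqxx.
- by rewrite ex eqxx; move: ed; rewrite ex => /negbTE ->.
- by move: ex; rewrite ed => /negbTE ->.
- by rewrite (negbTE ex).
Qed.

Lemma resolveC b b' x d D : x != d ->
  resolve b d (resolve b' x D) = resolve b' x (resolve b d D).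
Proof.
move=> xd; have dx : d != x by rewrite eq_sym.
rewrite /resolve; case H1: (has _ D); case H2: (has _ D);
  by rewrite ?has_cchange ?H1 ?H2 // cchangeC.
Qed.

Section VassilievExtension.
Variable A : zmodType.

Lemma vext_resolve (V : gcode -> A) b d D M : d \notin M ->
  vext V (resolve b d D) M = vext (fun D => V (resolve b d D)) D M.
Proof.
elim: M D => [|x M IH] D //=; rewrite inE negb_or => /andP[dx dM].
have xd : x != d by rewrite eq_sym.
by rewrite -(resolveC b true D xd) -(resolveC b false D xd) !IH.
Qed.

Lemma vextB (V1 V2 : gcode -> A) D M :
  vext (fun D => V1 D - V2 D) D M = vext V1 D M - vext V2 D M.
Proof. by elim: M D => [|x M IH] D //=; rewrite !IH !opprD !opprK addrACA. Qed.

Lemma vext_eq0 (V : gcode -> A) (Q : gcode -> Prop) D (M : seq nat) :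
  (forall x b D, x \in M -> Q D -> Q (resolve b x D) /\ V (resolve b x D) = V D) ->
  Q D -> M != [::] -> vext V D M = 0.
Proof.
elim: M D => [|x M IH] D // HV QD _ /=.
have HV' y b D' : y \in M -> Q D' -> Q (resolve b y D') /\ V (resolve b y D') = V D'.
  by move=> yM; apply: HV; rewrite inE yM orbT.
have [Q1 V1] := HV x true D (mem_head _ _) QD.
have [Q2 V2] := HV x false D (mem_head _ _) QD.
case: M {HV} IH HV' => [|y M] IH HV'; first by rewrite /= V1 V2 subrr.
by rewrite !IH // subrr.
Qed.

End VassilievExtension.

Lemma vassiliev_le1_pt : vassiliev_le pt 1.
Proof.
move=> D [|d [|d' M]] // wD; rewrite [uniq _]/= [all _ _]/= => /andP[dM _] /andP[dD _] _.
have -> : vext pt D (d :: d' :: M) =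
  vext pt (resolve true d D) (d' :: M) - vext pt (resolve false d D) (d' :: M) by [].
rewrite !vext_resolve // -vextB.
apply: (@vext_eq0 _ _ (fun D => wf D /\ d \in labels D)) => // x b D0 xM [wD0 dD0].
have xd : x != d by apply: contraNneq dM => <-.
split; first by split; [exact: wf_resolve | rewrite labels_resolve].
rewrite (pt_resolveB (@wf_resolve b x _ wD0)) ?labels_resolve //.
by rewrite pt_resolveB // ind_resolve.
Qed.

Definition virtual_trefoil : gcode :=
  [:: Pass 1 true true; Pass 2 true true; Pass 1 false true; Pass 2 false true].

Lemma wf_virtual_trefoil : wf virtual_trefoil.
Proof.
by move=> d; rewrite /= !inE => /or4P[] /eqP ->; exists true; repeat split.
Qed.

Lemma not_vassiliev_le0_pt : ~ vassiliev_le pt 0.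
Proof.
move=> /(_ virtual_trefoil [:: 1%N] wf_virtual_trefoil isT isT isT) /=.
have ind1 : ind virtual_trefoil 1 = 1 by rewrite /ind /arc /= big_cons big_nil.
rewrite (pt_resolveB wf_virtual_trefoil) // ind1.
by rewrite /= expr1 => /(congr1 (horner^~ 0)); rewrite !hornerE.
Qed.

Theorem mainTheorem2 :
  vk_invariant pt /\ vassiliev_le pt 1 /\ ~ vassiliev_le pt 0.
Proof.
split; first exact: vk_invariant_pt.
split; first exact: vassiliev_le1_pt.
exact: not_vassiliev_le0_pt.
Qed.
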